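(* Let $f:\mathbb{N}\to(0,\infty)$ be a function such that both $f$ and $1/f$ (the function $n\mapsto f(n)^{-1}$) are weakly super-multiplicative. Suppose $f$ has a normal order $g:(0,\infty)\to(0,\infty)$ which is monotonic or $\log$-uniformly continuous. Then there exists a constant $c\in\mathbb{R}$ such that $f(n)=n^c$ for all $n\in\mathbb{N}$.
   Context: A function $f:\mathbb{N}\to[0,\infty)$ is weakly super-multiplicative if for all $n\in\mathbb{N}$ and all $\epsilon>0$ there exist $x_0>0$ and $\delta>0$ such that for all real $x>x_0$, $\#\{m\in\mathbb{N}\cap[x,(1+\epsilon)x]: f(nm)\ge(1-\epsilon)f(n)f(m)\}\ge\delta x$. A function $f:\mathbb{N}\to[0,\infty)$ has normal order $g$ if for every $\epsilon>0$ the set $\{n\in\mathbb{N}: |f(n)-g(n)|\ge\epsilon g(n)\}$ has upper (natural) density $0$. A function $g:(0,\infty)\to(0,\infty)$ is $\log$-uniformly continuous if for every $\epsilon>0$ there is $\delta>0$ such that for all $x,y>0$ with $|x/y-1|<\delta$ we have $|g(x)/g(y)-1|<\epsilon$. *)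

From Stdlib Require Import Reals Lra Lia List Bool.
Open Scope bool_scope.
Open Scope R_scope.

Definition Rleb (a b : R) : bool := if Rle_dec a b then true else false.

Definition count_range (P : nat -> bool) (lo hi : nat) : nat :=
  length (filter P (seq lo (S hi - lo))).

Definition wsm_count (f : nat -> R) (n : nat) (eps x : R) : nat :=
  count_range
    (fun m => Rleb x (INR m) && Rleb (INR m) ((1 + eps) * x)
              && Rleb ((1 - eps) * f n * f m) (f (n * m)%nat))
    1 (Z.to_nat (up ((1 + eps) * x))).

Definition weakly_supermult (f : nat -> R) : Prop :=
  forall n : nat, (1 <= n)%nat -> forall eps : R, 0 < eps ->
    exists x0 delta : R, 0 < x0 /\ 0 < delta /\
      forall x : R, x0 < x -> delta * x <= INR (wsm_count f n eps x).

Definition upper_density_zero (A : nat -> bool) : Prop :=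
  forall eta : R, 0 < eta -> exists N0 : nat, forall N : nat, (N0 <= N)%nat ->
    (1 <= N)%nat -> INR (count_range A 1 N) / INR N <= eta.

Definition normal_order (f : nat -> R) (g : R -> R) : Prop :=
  forall eps : R, 0 < eps ->
    upper_density_zero
      (fun n => Rleb (eps * g (INR n)) (Rabs (f n - g (INR n)))).

Definition monotonic_pos (g : R -> R) : Prop :=
  (forall x y, 0 < x -> x <= y -> g x <= g y) \/
  (forall x y, 0 < x -> x <= y -> g y <= g x).

Definition log_unif_cont (g : R -> R) : Prop :=
  forall eps : R, 0 < eps -> exists delta : R, 0 < delta /\
    forall x y : R, 0 < x -> 0 < y -> Rabs (x / y - 1) < delta ->
      Rabs (g x / g y - 1) < eps.

(* Weak super-multiplicativity of [f] gives, for large [y], many [m] near [y] with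
   [f (n m) >= (1 - eps) f n f m]; since [f] is close to [g] outside a set of density zero, one
   such [m] also has [f m ~ g m] and [f (n m) ~ g (n m)], whence [f n g y <~ g (n y)] whenever [g]
   is nearly constant on short multiplicative windows around [y] and [n y].  The same argument for
   [1/f] gives the reverse inequality.  Both regularity assumptions on [g] provide arbitrarily
   large [y] with [g] nearly constant around [y], [a y] and [b y] simultaneously (a monotone [g]
   satisfies a doubling bound, and pigeonhole along a geometric progression finds a slow step),
   so [f (n k) = f n f k] and [f] varies by a bounded factor on dyadic intervals [a, 2a].  Then
   [k log f n - j log f 2] stays bounded when [2^j <= n^k <= 2^(j+1)], forcing [f n = n^c].
   A decreasing [g] reduces to an increasing one through [f, g -> 1/f, 1/g]. *)

From Stdlib Require Import Reals Lra Lia List Classical ZArith FunctionalExtensionality.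
Open Scope R_scope.

Lemma Rleb_true a b : Rleb a b = true <-> a <= b.
Proof. unfold Rleb; destruct (Rle_dec a b); split; easy || lra. Qed.

Lemma Rleb_false a b : Rleb a b = false <-> b < a.
Proof. unfold Rleb; destruct (Rle_dec a b); split; easy || lra. Qed.

Lemma up_nat_bounds r : 0 < r ->
  r < INR (Z.to_nat (up r)) /\ INR (Z.to_nat (up r)) <= r + 1.
Proof.
  intros Hr. destruct (archimed r) as [H1 H2].
  assert (Hz : (0 <= up r)%Z) by (apply le_IZR; lra).
  rewrite INR_IZR_INZ, Z2Nat.id by exact Hz. lra.
Qed.

Lemma INR_ge1 n : (1 <= n)%nat -> 1 <= INR n.
Proof. intros Hn. apply (le_INR 1). exact Hn. Qed.

Lemma Rmult_ge1 x y : 1 <= x -> 1 <= y -> 1 <= x * y.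
Proof. intros. nra. Qed.

(** * Counting in [1, N] *)

Lemma count_range_0 P : count_range P 1 0 = 0%nat.
Proof. reflexivity. Qed.

Lemma count_range_S P N :
  count_range P 1 (S N) = (count_range P 1 N + (if P (S N) then 1 else 0))%nat.
Proof.
  unfold count_range. replace (S (S N) - 1)%nat with (S N) by lia.
  replace (S N - 1)%nat with N by lia.
  rewrite seq_S, filter_app, length_app. simpl. destruct (P (S N)); simpl; lia.
Qed.

Lemma count_range_mono P Q N : (forall m, (1 <= m)%nat -> P m = true -> Q m = true) ->
  (count_range P 1 N <= count_range Q 1 N)%nat.
Proof.
  intros H. induction N as [|N IH]; [rewrite !count_range_0; lia|].
  rewrite !count_range_S. destruct (P (S N)) eqn:E.
  - rewrite (H (S N) ltac:(lia) E). lia.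
  - destruct (Q (S N)); lia.
Qed.

Lemma count_range_le_add A N d : (1 <= d)%nat ->
  (count_range A 1 N + (if A (N + d)%nat then 1 else 0) <= count_range A 1 (N + d))%nat.
Proof.
  intros Hd. destruct d as [|d]; [lia|]. clear Hd. induction d as [|d IH].
  - rewrite Nat.add_1_r, count_range_S. lia.
  - replace (N + S (S d))%nat with (S (N + S d)) by lia. rewrite count_range_S.
    destruct (A (N + S d)%nat), (A (S (N + S d))); lia.
Qed.

Lemma count_range_dilate n A N : (1 <= n)%nat ->
  (count_range (fun m => A (n * m)%nat) 1 N <= count_range A 1 (n * N))%nat.
Proof.
  intros Hn. induction N as [|N IH].
  - rewrite Nat.mul_0_r, !count_range_0. lia.
  - rewrite count_range_S. replace (n * S N)%nat with (n * N + n)%nat by lia.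
    pose proof (count_range_le_add A (n * N) n Hn). lia.
Qed.

Lemma count_range_avoid P A B N :
  (count_range A 1 N + count_range B 1 N < count_range P 1 N)%nat ->
  exists m, (1 <= m <= N)%nat /\ P m = true /\ A m = false /\ B m = false.
Proof.
  induction N as [|N IH]; [rewrite !count_range_0; lia|]. rewrite !count_range_S. intros H.
  destruct (P (S N)) eqn:EP, (A (S N)) eqn:EA, (B (S N)) eqn:EB;
    first [ exists (S N); repeat split; (assumption || lia)
          | destruct IH as [m [Hm Hgood]]; [lia | exists m; split; [lia | exact Hgood]] ].
Qed.

Lemma upper_density_zero_count A : upper_density_zero A -> forall c, 0 < c ->
  exists N0, forall N, (N0 <= N)%nat -> (1 <= N)%nat -> INR (count_range A 1 N) <= c * INR N.
Proof.
  intros HA c Hc. destruct (HA c Hc) as [N0 HN0]. exists N0. intros N HN HN1.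
  pose proof (HN0 N HN HN1) as H. pose proof (INR_ge1 N HN1).
  apply Rmult_le_compat_r with (r := INR N) in H; [|lra].
  unfold Rdiv in H. rewrite Rmult_assoc, Rinv_l, Rmult_1_r in H; lra.
Qed.

(** * Good multipliers *)

Definition eventually (P : R -> Prop) : Prop := exists X, forall y, X <= y -> P y.

Lemma eventually_and P Q : eventually P -> eventually Q -> eventually (fun y => P y /\ Q y).
Proof.
  intros [X HX] [Y HY]. exists (Rmax X Y). intros y Hy.
  split; [apply HX | apply HY]; eapply Rle_trans; [apply Rmax_l | | apply Rmax_r |]; exact Hy.
Qed.

Lemma eventually_ge c : eventually (fun y => c <= y).
Proof. exists c. easy. Qed.

Lemma eventually_scale P t : 1 <= t -> eventually P -> eventually (fun y => P (t * y)).
Proof.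
  intros Ht [X HX]. exists (Rabs X). intros y Hy. apply HX.
  pose proof (Rle_abs X). pose proof (Rabs_pos X). nra.
Qed.

(* The window [y, (1+eps) y] contains at least [delta y] integers [m] with [Q m], while the
   exceptional sets of the normal order, at [m] and at [n m], have density zero and so contribute
   fewer than [delta y / 2] of them. *)
Lemma good_multiplier_in_window f g n eps (Q : nat -> bool) :
  (1 <= n)%nat -> 0 < eps <= 1 -> normal_order f g ->
  (exists x0 delta, 0 < x0 /\ 0 < delta /\ forall x, x0 < x ->
     delta * x <= INR (count_range
                         (fun m => Rleb x (INR m) && Rleb (INR m) ((1 + eps) * x) && Q m)
                         1 (Z.to_nat (up ((1 + eps) * x))))) ->
  eventually (fun y => exists m, (1 <= m)%nat /\ y <= INR m <= (1 + eps) * y /\ Q m = true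
     /\ Rabs (f m - g (INR m)) < eps * g (INR m)
     /\ Rabs (f (n * m)%nat - g (INR n * INR m)) < eps * g (INR n * INR m)).
Proof.
  intros Hn Heps Hno [x0 [delta [Hx0 [Hd Hcount]]]].
  set (Bad := fun k : nat => Rleb (eps * g (INR k)) (Rabs (f k - g (INR k)))).
  pose proof (INR_ge1 n Hn) as HnR.
  set (c := delta / (6 * (1 + INR n))).
  assert (Hc : c * (6 * (1 + INR n)) = delta) by (unfold c; field; lra).
  assert (Hcpos : 0 < c) by (unfold c; apply Rdiv_lt_0_compat; lra).
  destruct (upper_density_zero_count Bad (Hno eps (proj1 Heps)) c Hcpos) as [N0 HN0].
  exists (x0 + INR N0 + 1). intros y Hy. pose proof (pos_INR N0).
  set (M := Z.to_nat (up ((1 + eps) * y))).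
  destruct (up_nat_bounds ((1 + eps) * y)) as [HM1 HM2]; [nra|]. fold M in HM1, HM2.
  assert (HN0M : (N0 <= M)%nat) by (apply INR_le; nra).
  assert (HM : (1 <= M)%nat) by (apply INR_le; simpl; nra).
  pose proof (HN0 M HN0M HM) as Bad_M.
  pose proof (HN0 (n * M)%nat ltac:(nia) ltac:(nia)) as Bad_nM. rewrite mult_INR in Bad_nM.
  pose proof (le_INR _ _ (count_range_dilate n Bad M Hn)) as Bad_dilate.
  pose proof (Hcount y ltac:(lra)) as Window. fold M in Window.
  destruct (count_range_avoid
              (fun m => Rleb y (INR m) && Rleb (INR m) ((1 + eps) * y) && Q m)
              Bad (fun m => Bad (n * m)%nat) M) as [m [Hm [Pm [Gm Gnm]]]].
  { assert (HM3 : INR M <= 3 * y) by nra.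
    assert (c * (1 + INR n) * INR M <= delta / 2 * y).
    { replace (delta / 2 * y) with (c * (1 + INR n) * (3 * y)) by (rewrite <- Hc; field).
      apply Rmult_le_compat_l; nra. }
    apply INR_lt. rewrite plus_INR. nra. }
  apply andb_prop in Pm as [Pm HQ]. apply andb_prop in Pm as [Pm1 Pm2].
  apply Rleb_true in Pm1, Pm2. unfold Bad in Gm, Gnm. apply Rleb_false in Gm, Gnm.
  rewrite mult_INR in Gnm. exists m. repeat split; easy || lia.
Qed.

Lemma Rabs_inv_sub_lt a b e : 0 < a -> 0 < b -> 0 < e ->
  Rabs (a - b) < e / (1 + e) * b -> Rabs (/ a - / b) < e * / b.
Proof.
  intros Ha Hb He H. apply Rabs_def2 in H as [H1 H2].
  set (d := e / (1 + e)) in *.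
  assert (Hd : d * (1 + e) = e) by (unfold d; field; lra).
  assert (Hia : a * / a = 1) by (field; lra). assert (Hib : b * / b = 1) by (field; lra).
  pose proof (Rinv_0_lt_compat a Ha). pose proof (Rinv_0_lt_compat b Hb).
  assert (Hdb : d * b < e * a) by nra.
  apply Rabs_def1; nra.
Qed.

Lemma normal_order_inv f g :
  (forall n, (1 <= n)%nat -> 0 < f n) -> (forall x, 0 < x -> 0 < g x) ->
  normal_order f g -> normal_order (fun n => / f n) (fun x => / g x).
Proof.
  intros hf hg Hno eps Heps eta Heta.
  destruct (Hno (eps / (1 + eps)) ltac:(apply Rdiv_lt_0_compat; lra) eta Heta) as [N0 HN0].
  exists N0. intros N HN HN1. eapply Rle_trans; [|exact (HN0 N HN HN1)].
  apply Rmult_le_compat_r; [left; apply Rinv_0_lt_compat, lt_0_INR; lia|].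
  apply le_INR, count_range_mono. intros m Hm Hbad.
  apply Rleb_true in Hbad. apply Rleb_true, Rnot_lt_le. intros Hgood.
  assert (HmR : 0 < INR m) by (apply lt_0_INR; lia).
  pose proof (Rabs_inv_sub_lt (f m) (g (INR m)) eps (hf m Hm) (hg _ HmR) Heps Hgood). lra.
Qed.

Lemma Rinv_inv_fun (f : nat -> R) : (fun n => / / f n) = f.
Proof. apply functional_extensionality. intros n. apply Rinv_inv. Qed.

Lemma supermult_witness f g :
  (forall n, (1 <= n)%nat -> 0 < f n) -> (forall x, 0 < x -> 0 < g x) ->
  normal_order f g -> weakly_supermult f ->
  forall n, (1 <= n)%nat -> forall eps, 0 < eps <= 1 ->
  eventually (fun y => exists m, (1 <= m)%nat /\ y <= INR m <= (1 + eps) * y /\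
    (1 - eps) ^ 2 * f n * g (INR m) <= (1 + eps) * g (INR n * INR m)).
Proof.
  intros hf hg Hno Hw n Hn eps Heps.
  destruct (good_multiplier_in_window f g n eps
              (fun m => Rleb ((1 - eps) * f n * f m) (f (n * m)%nat)) Hn Heps Hno)
    as [X HX]; [exact (Hw n Hn eps (proj1 Heps)) |].
  exists X. intros y Hy. destruct (HX y Hy) as [m [Hm [Hwin [Hsup [Hfm Hfnm]]]]].
  exists m. split; [exact Hm | split; [exact Hwin |]].
  apply Rleb_true in Hsup. apply Rabs_def2 in Hfm as [_ Hfm], Hfnm as [Hfnm _].
  assert (0 < f n) by (apply hf; exact Hn). pose proof (INR_ge1 m Hm).
  assert (0 < g (INR m)) by (apply hg; lra).
  assert ((1 - eps) * f n * ((1 - eps) * g (INR m)) <= (1 - eps) * f n * f m)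
    by (apply Rmult_le_compat_l; nra).
  nra.
Qed.

Lemma submult_witness f g :
  (forall n, (1 <= n)%nat -> 0 < f n) -> (forall x, 0 < x -> 0 < g x) ->
  normal_order f g -> weakly_supermult (fun n => / f n) ->
  forall n, (1 <= n)%nat -> forall eps, 0 < eps <= 1 ->
  eventually (fun y => exists m, (1 <= m)%nat /\ y <= INR m <= (1 + eps) * y /\
    (1 - eps) ^ 2 * g (INR n * INR m) <= (1 + eps) * f n * g (INR m)).
Proof.
  intros hf hg Hno Hw n Hn eps Heps.
  assert (hf' : forall k, (1 <= k)%nat -> 0 < / f k) by (intros; apply Rinv_0_lt_compat, hf; easy).
  assert (hg' : forall x, 0 < x -> 0 < / g x) by (intros; apply Rinv_0_lt_compat, hg; easy).
  destruct (supermult_witness _ _ hf' hg' (normal_order_inv f g hf hg Hno) Hw n Hn eps Heps)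
    as [X HX].
  exists X. intros y Hy. destruct (HX y Hy) as [m [Hm [Hwin Hest]]].
  exists m. split; [exact Hm | split; [exact Hwin |]].
  pose proof (INR_ge1 n Hn). pose proof (INR_ge1 m Hm).
  assert (0 < f n) by (apply hf; exact Hn).
  assert (0 < g (INR m)) by (apply hg; lra).
  assert (0 < g (INR n * INR m)) by (apply hg; nra).
  apply Rmult_le_compat_r with (r := f n * g (INR m) * g (INR n * INR m)) in Hest;
    [| left; repeat apply Rmult_lt_0_compat; assumption].
  replace ((1 - eps) ^ 2 * / f n * / g (INR m) * (f n * g (INR m) * g (INR n * INR m)))
    with ((1 - eps) ^ 2 * g (INR n * INR m)) in Hest by (field; lra).
  replace ((1 + eps) * / g (INR n * INR m) * (f n * g (INR m) * g (INR n * INR m)))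
    with ((1 + eps) * f n * g (INR m)) in Hest by (field; lra).
  exact Hest.
Qed.

(** * Regularity of the normal order *)

Definition nearly_constant (g : R -> R) (L y rho : R) : Prop :=
  forall z, y <= z <= rho * y -> g z <= L * g y /\ g y <= L * g z.

Definition simultaneously_flat (g : R -> R) : Prop :=
  forall L, 1 < L -> exists rho, 1 < rho /\ forall a b X, 1 <= a -> 1 <= b ->
    exists y, X <= y /\ nearly_constant g L y rho /\
      nearly_constant g L (a * y) rho /\ nearly_constant g L (b * y) rho.

Definition doubling (g : R -> R) : Prop :=
  exists C, 0 < C /\ eventually (fun w => forall z, w <= z <= 2 * w ->
    g z <= C * g w /\ g w <= C * g z).

Lemma exists_slow_step (u : nat -> R) L M J : (forall j, 0 < u j) -> 0 < L ->
  M < L ^ J -> u J <= M * u O -> exists j, (j < J)%nat /\ u (S j) <= L * u j.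
Proof.
  intros Hu HL HM HJ. apply NNPP. intros Hnone.
  assert (Hgrow : forall i, (i <= J)%nat -> L ^ i * u O <= u i).
  { induction i as [|i IH]; intros Hi; [simpl; lra|].
    assert (L * u i < u (S i)).
    { apply Rnot_le_lt. intros Hslow. apply Hnone. exists i. split; [lia | exact Hslow]. }
    specialize (IH ltac:(lia)). simpl. nra. }
  pose proof (Hgrow J (le_n J)). pose proof (Hu O). nra.
Qed.

Lemma Rmult3_factors_le a a' b b' c c' L : 0 < a <= a' -> 0 < b <= b' -> 0 < c <= c' ->
  a' * b' * c' <= L * (a * b * c) -> a' <= L * a /\ b' <= L * b /\ c' <= L * c.
Proof.
  intros Ha Hb Hc H.
  assert (a' * b * c <= a' * b' * c') by (apply Rmult_le_compat; nra).
  assert (a * b' * c <= a' * b' * c') by (apply Rmult_le_compat; nra).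
  assert (a * b * c' <= a' * b' * c') by (apply Rmult_le_compat; nra).
  repeat split; [apply Rmult_le_reg_r with (b * c) | apply Rmult_le_reg_r with (a * c)
                | apply Rmult_le_reg_r with (a * b)]; nra.
Qed.

Lemma exists_root_of_two J : (1 <= J)%nat -> exists rho, 1 < rho /\ rho ^ J = 2.
Proof.
  intros HJ. assert (HJR : 0 < INR J) by (apply lt_0_INR; lia).
  exists (Rpower 2 (/ INR J)). split.
  - rewrite <- (Rpower_O 2) by lra. apply Rpower_lt; [lra | apply Rinv_0_lt_compat, HJR].
  - rewrite <- Rpower_pow by (apply exp_pos). rewrite Rpower_mult, Rinv_l by lra.
    apply Rpower_1. lra.
Qed.

Section IncreasingNormalOrder.

Variable g : R -> R.
Hypothesis g_pos : forall x, 0 < x -> 0 < g x.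
Hypothesis g_incr : forall x y, 0 < x -> x <= y -> g x <= g y.

Lemma nearly_constant_of_increasing L y rho : 0 < y -> 1 <= rho -> 1 <= L ->
  g (rho * y) <= L * g y -> nearly_constant g L y rho.
Proof.
  intros Hy Hrho HL Hstep z [Hz1 Hz2].
  pose proof (g_incr y z Hy Hz1). pose proof (g_incr z (rho * y) ltac:(lra) Hz2).
  pose proof (g_pos z ltac:(lra)). split; nra.
Qed.

Lemma doubling_prod3 C X0 a b y :
  (forall w, X0 <= w -> forall z, w <= z <= 2 * w -> g z <= C * g w /\ g w <= C * g z) ->
  1 <= a -> 1 <= b -> 1 <= y -> X0 <= y ->
  g (2 * y) * g (a * (2 * y)) * g (b * (2 * y)) <= C ^ 3 * (g y * g (a * y) * g (b * y)).
Proof.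
  intros HD Ha Hb Hy1 Hy.
  assert (Hdbl : forall c, 1 <= c -> 0 < g (c * (2 * y)) <= C * g (c * y)).
  { intros c Hc. pose proof (Rmult_ge1 c y Hc Hy1). split.
    - apply g_pos. nra.
    - replace (c * (2 * y)) with (2 * (c * y)) by ring.
      apply (HD (c * y) ltac:(nra) (2 * (c * y)) ltac:(lra)). }
  destruct (Hdbl 1 ltac:(lra)) as [D1 D1']. destruct (Hdbl a Ha) as [D2 D2'].
  destruct (Hdbl b Hb) as [D3 D3']. rewrite Rmult_1_l in D1; rewrite !Rmult_1_l in D1'.
  replace (C ^ 3 * (g y * g (a * y) * g (b * y)))
    with (C * g y * (C * g (a * y)) * (C * g (b * y))) by ring.
  apply Rmult_le_compat; [nra | lra | | exact D3'].
  apply Rmult_le_compat; lra.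
Qed.

(* Along the geometric sequence [rho^j y0] with [rho^J = 2] the product of the three values
   grows by at most [C^3] (doubling) in [J] steps, so some step grows by at most [L]. *)
Lemma exists_slow_scale : doubling g -> forall L, 1 < L -> exists rho, 1 < rho /\
  forall a b X, 1 <= a -> 1 <= b -> exists y, X <= y /\ 1 <= y /\
    g (rho * y) * g (a * (rho * y)) * g (b * (rho * y)) <= L * (g y * g (a * y) * g (b * y)).
Proof.
  intros [C [_ [X0 HD]]] L HL.
  destruct (Pow_x_infinity L ltac:(rewrite Rabs_pos_eq; lra) (C ^ 3 + 1)) as [J0 HJ0].
  pose proof (HJ0 (S J0) ltac:(lia)) as HLJ.
  rewrite Rabs_pos_eq in HLJ by (apply pow_le; lra).
  destruct (exists_root_of_two (S J0) ltac:(lia)) as [rho [Hrho HrhoJ]].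
  exists rho. split; [exact Hrho|]. intros a b X Ha Hb.
  set (y0 := Rmax (Rmax X X0) 1).
  assert (Hy0X : X <= y0) by (eapply Rle_trans; [apply Rmax_l | apply Rmax_l]).
  assert (Hy0X0 : X0 <= y0) by (eapply Rle_trans; [apply Rmax_r | apply Rmax_l]).
  assert (Hy01 : 1 <= y0) by apply Rmax_r.
  set (P := fun y => g y * g (a * y) * g (b * y)).
  assert (HP : forall y, 1 <= y -> 0 < P y).
  { intros y Hy. unfold P. repeat apply Rmult_lt_0_compat; apply g_pos;
      pose proof (Rmult_ge1 a y Ha Hy); pose proof (Rmult_ge1 b y Hb Hy); lra. }
  assert (Hrhoj : forall j, 1 <= rho ^ j * y0).
  { intros j. apply Rmult_ge1; [apply pow_R1_Rle; lra | exact Hy01]. }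
  assert (HPJ : P (rho ^ S J0 * y0) <= C ^ 3 * P (rho ^ O * y0)).
  { unfold P. rewrite HrhoJ, pow_O, Rmult_1_l.
    exact (doubling_prod3 C X0 a b y0 HD Ha Hb Hy01 Hy0X0). }
  destruct (exists_slow_step (fun j => P (rho ^ j * y0)) L (C ^ 3) (S J0)
              (fun j => HP _ (Hrhoj j)) ltac:(lra) ltac:(lra) HPJ) as [j [_ Hslow]].
  exists (rho ^ j * y0). split; [|split; [apply Hrhoj|]].
  - pose proof (pow_R1_Rle rho j ltac:(lra)). nra.
  - replace (rho * (rho ^ j * y0)) with (rho ^ S j * y0) by (simpl; ring). exact Hslow.
Qed.

Lemma simultaneously_flat_of_increasing : doubling g -> simultaneously_flat g.
Proof.
  intros Hdbl L HL. destruct (exists_slow_scale Hdbl L HL) as [rho [Hrho Hslow_scale]].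
  exists rho. split; [exact Hrho|]. intros a b X Ha Hb.
  destruct (Hslow_scale a b X Ha Hb) as [y [HXy [Hy1 Hslow]]].
  assert (Hfactor : forall c, 1 <= c -> 0 < g (c * y) <= g (c * (rho * y))).
  { intros c Hc. pose proof (Rmult_ge1 c y Hc Hy1).
    split; [apply g_pos; lra | apply g_incr; nra]. }
  destruct (Hfactor 1 ltac:(lra)) as [H1 H1']. rewrite Rmult_1_l in H1; rewrite !Rmult_1_l in H1'.
  destruct (Rmult3_factors_le _ _ _ _ _ _ L (conj H1 H1') (Hfactor a Ha) (Hfactor b Hb) Hslow)
    as [S1 [Sa Sb]].
  pose proof (Rmult_ge1 a y Ha Hy1). pose proof (Rmult_ge1 b y Hb Hy1).
  exists y. split; [exact HXy|].
  split; [|split]; apply nearly_constant_of_increasing; try lra.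
  - replace (rho * (a * y)) with (a * (rho * y)) by ring. exact Sa.
  - replace (rho * (b * y)) with (b * (rho * y)) by ring. exact Sb.
Qed.

End IncreasingNormalOrder.

Section LogUniformlyContinuousNormalOrder.

Variable g : R -> R.
Hypothesis g_pos : forall x, 0 < x -> 0 < g x.
Hypothesis g_luc : log_unif_cont g.

Lemma nearly_constant_of_log_unif_cont L : 1 < L ->
  exists rho, 1 < rho /\ forall y, 0 < y -> nearly_constant g L y rho.
Proof.
  intros HL. destruct (g_luc (1 - / L)) as [d [Hd Hdg]].
  { assert (/ L < 1) by (rewrite <- Rinv_1; apply Rinv_lt_contravar; lra). lra. }
  exists (1 + d / 2). split; [lra|]. intros y Hy z [Hz1 Hz2].
  assert (Hzy : Rabs (z / y - 1) < d).
  { assert (1 <= z / y <= 1 + d / 2).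
    { split; apply Rmult_le_reg_r with y; try exact Hy;
        unfold Rdiv; rewrite Rmult_assoc, Rinv_l, Rmult_1_r; lra. }
    rewrite Rabs_pos_eq; lra. }
  specialize (Hdg z y ltac:(lra) Hy Hzy). apply Rabs_def2 in Hdg as [H1 H2].
  pose proof (g_pos y Hy). pose proof (g_pos z ltac:(lra)).
  assert (Hratio : g z = g z / g y * g y) by (field; lra).
  set (r := g z / g y) in *. rewrite Hratio.
  assert (HLinv : L * / L = 1) by (field; lra).
  assert (r <= L) by nra.
  assert (1 <= L * r) by nra.
  split; nra.
Qed.

Lemma simultaneously_flat_of_log_unif_cont : simultaneously_flat g.
Proof.
  intros L HL. destruct (nearly_constant_of_log_unif_cont L HL) as [rho [Hrho Hflat]].
  exists rho. split; [exact Hrho|]. intros a b X Ha Hb.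
  exists (Rmax X 1). pose proof (Rmax_r X 1).
  split; [apply Rmax_l | split; [|split]]; apply Hflat; nra.
Qed.

Lemma nearly_constant_iter L rho : 1 <= L -> 1 <= rho ->
  (forall y, 0 < y -> nearly_constant g L y rho) ->
  forall i w z, 0 < w -> w <= z <= rho ^ i * w -> g z <= L ^ i * g w /\ g w <= L ^ i * g z.
Proof.
  intros HL Hrho Hflat. induction i as [|i IH]; intros w z Hw [Hz1 Hz2].
  - simpl in *. replace z with w by lra. lra.
  - pose proof (pow_R1_Rle rho i Hrho). pose proof (pow_R1_Rle L i HL).
    pose proof (g_pos w Hw). pose proof (g_pos z ltac:(lra)).
    destruct (Rle_dec z (rho ^ i * w)) as [Hle | Hgt].
    + destruct (IH w z Hw ltac:(lra)). simpl. split; nra.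
    + assert (Hv : w <= rho ^ i * w) by nra. simpl in Hz2.
      destruct (IH w (rho ^ i * w) Hw ltac:(lra)) as [I1 I2].
      destruct (Hflat (rho ^ i * w) ltac:(lra) z) as [J1 J2]; [lra|].
      pose proof (g_pos (rho ^ i * w) ltac:(lra)). simpl. split; nra.
Qed.

Lemma doubling_of_log_unif_cont : doubling g.
Proof.
  destruct (nearly_constant_of_log_unif_cont 2 ltac:(lra)) as [rho [Hrho Hflat]].
  destruct (Pow_x_infinity rho ltac:(rewrite Rabs_pos_eq; lra) 2) as [N HN].
  specialize (HN N (le_n N)). rewrite Rabs_pos_eq in HN by (apply pow_le; lra).
  exists (2 ^ N). split; [apply pow_lt; lra|].
  exists 1. intros w Hw z Hz.
  apply (nearly_constant_iter 2 rho ltac:(lra) ltac:(lra) Hflat N w z ltac:(lra)). nra.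
Qed.

End LogUniformlyContinuousNormalOrder.

(** * From multiplicativity to a power law *)

Lemma ln_le_compat x y : 0 < x -> x <= y -> ln x <= ln y.
Proof. intros Hx [H | H]; [left; apply ln_increasing; assumption | subst; lra]. Qed.

Lemma Rabs_ln_sub_le x y B : 0 < x -> 0 < y -> y <= B * x -> x <= B * y ->
  Rabs (ln y - ln x) <= ln B.
Proof.
  intros Hx Hy H1 H2. assert (HB : 0 < B) by nra.
  apply ln_le_compat in H1; [|exact Hy]. apply ln_le_compat in H2; [|exact Hx].
  rewrite ln_mult in H1, H2 by assumption. apply Rabs_le. lra.
Qed.

Lemma eq0_of_linear_bound D A : (forall k, (1 <= k)%nat -> Rabs (INR k * D) <= A) -> D = 0.
Proof.
  intros H. destruct (Req_dec D 0) as [| HD]; [assumption | exfalso].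
  assert (HaD : 0 < Rabs D) by (apply Rabs_pos_lt; exact HD).
  assert (HA : 0 <= A) by (eapply Rle_trans; [apply Rabs_pos | apply (H 1%nat); lia]).
  assert (HAD : 0 <= A / Rabs D)
    by (apply Rmult_le_pos; [exact HA | left; apply Rinv_0_lt_compat, HaD]).
  destruct (up_nat_bounds (A / Rabs D + 1) ltac:(lra)) as [Hk _].
  set (k := Z.to_nat (up (A / Rabs D + 1))) in Hk.
  specialize (H k ltac:(apply INR_le; simpl; lra)).
  rewrite Rabs_mult, Rabs_pos_eq in H by apply pos_INR.
  assert (A / Rabs D * Rabs D = A) by (field; lra). nra.
Qed.

Lemma exists_dyadic_bracket N : (1 <= N)%nat -> exists j, (2 ^ j <= N <= 2 * 2 ^ j)%nat.
Proof.
  intros HN. destruct (Nat.log2_spec N HN) as [H1 H2].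
  exists (Nat.log2 N). rewrite Nat.pow_succ_r' in H2. lia.
Qed.

Section PowerLaw.

Variable f : nat -> R.
Hypothesis f_pos : forall n, (1 <= n)%nat -> 0 < f n.
Hypothesis f_mul : forall n k, (1 <= n)%nat -> (1 <= k)%nat -> f (n * k)%nat = f n * f k.

Lemma f_pow n k : (1 <= n)%nat -> f (n ^ k)%nat = f n ^ k.
Proof.
  intros Hn. assert (f1 : f 1%nat = 1).
  { pose proof (f_mul 1 1 (le_n 1) (le_n 1)) as H. pose proof (f_pos 1 (le_n 1)). simpl in H. nra. }
  induction k as [|k IH]; [exact f1|].
  rewrite Nat.pow_succ_r', f_mul, IH; [reflexivity | exact Hn |].
  pose proof (Nat.pow_nonzero n k). lia.
Qed.

Lemma power_law_of_dyadic_bound B :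
  (forall a b, (1 <= a)%nat -> (a <= b <= 2 * a)%nat -> f b <= B * f a /\ f a <= B * f b) ->
  exists c, forall n, (1 <= n)%nat -> f n = Rpower (INR n) c.
Proof.
  intros HB. assert (ln2 : 0 < ln 2) by (rewrite <- ln_1; apply ln_increasing; lra).
  pose proof (f_pos 2 ltac:(lia)) as f2.
  set (c := ln (f 2%nat) / ln 2). assert (Hc : c * ln 2 = ln (f 2%nat)) by (unfold c; field; lra).
  exists c. intros n Hn. pose proof (f_pos n Hn) as fn. pose proof (INR_ge1 n Hn).
  assert (KEY : ln (f n) - c * ln (INR n) = 0).
  { apply (eq0_of_linear_bound _ (ln B + Rabs c * ln 2)). intros k Hk.
    assert (HN : (1 <= n ^ k)%nat) by (pose proof (Nat.pow_nonzero n k); lia).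
    destruct (exists_dyadic_bracket _ HN) as [j Hj].
    assert (Hj1 : (1 <= 2 ^ j)%nat) by (pose proof (Nat.pow_nonzero 2 j); lia).
    destruct (HB (2 ^ j)%nat (n ^ k)%nat Hj1 Hj) as [E1 E2].
    rewrite !f_pow in E1, E2 by lia.
    pose proof (Rabs_ln_sub_le _ _ B (pow_lt _ j f2) (pow_lt _ k fn) E1 E2) as Ef.
    assert (Hj' : INR (2 ^ j) <= INR (n ^ k) <= 2 * INR (2 ^ j)).
    { split; [apply le_INR; lia|]. rewrite <- (mult_INR 2). apply le_INR. lia. }
    rewrite !pow_INR in Hj'. simpl INR in Hj'. replace (1 + 1) with 2 in Hj' by ring.
    assert (Hpow : 0 < 2 ^ j) by (apply pow_lt; lra).
    pose proof (Rabs_ln_sub_le (2 ^ j) (INR n ^ k) 2 Hpow ltac:(lra) ltac:(lra) ltac:(nra)) as En.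
    rewrite !ln_pow in Ef, En by lra.
    replace (INR k * (ln (f n) - c * ln (INR n))) with
      ((INR k * ln (f n) - INR j * ln (f 2%nat)) - c * (INR k * ln (INR n) - INR j * ln 2))
      by (rewrite <- Hc; ring).
    eapply Rle_trans; [apply Rabs_triang|]. rewrite Rabs_Ropp, Rabs_mult.
    apply Rplus_le_compat; [exact Ef | apply Rmult_le_compat_l; [apply Rabs_pos | exact En]]. }
  rewrite <- (exp_ln (f n)) by exact fn. unfold Rpower. f_equal. lra.
Qed.

End PowerLaw.

(** * Approximate multiplicativity *)

Lemma transfer_bound e e' p p' q q' : 0 < e' <= e -> e <= 1 / 11 -> 0 <= q' ->
  (1 - e') ^ 2 * p <= (1 + e') * q -> p' <= (1 + e) * p -> q <= (1 + e) * q' ->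
  p' <= (1 + 11 * e) * q'.
Proof.
  intros He He1 Hq' Hw Hp Hq.
  assert (Hsq : 0 < (1 - e') ^ 2) by (apply pow_lt; lra).
  assert (Hcube : (1 + e) ^ 2 * (1 + e') <= (1 + 11 * e) * (1 - e') ^ 2).
  { assert ((1 - e) ^ 2 <= (1 - e') ^ 2) by nra.
    assert ((1 + e) ^ 3 <= (1 + 11 * e) * (1 - e) ^ 2) by nra.
    assert ((1 + e) ^ 2 * (1 + e') <= (1 + e) ^ 3) by nra.
    nra. }
  apply Rmult_le_reg_l with ((1 - e') ^ 2); [exact Hsq|].
  apply Rle_trans with ((1 + e) * ((1 - e') ^ 2 * p)); [nra|].
  apply Rle_trans with ((1 + e) * ((1 + e') * ((1 + e) * q'))).
  { apply Rmult_le_compat_l; [lra|]. eapply Rle_trans; [exact Hw|].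
    apply Rmult_le_compat_l; lra. }
  replace ((1 + e) * ((1 + e') * ((1 + e) * q'))) with ((1 + e) ^ 2 * (1 + e') * q') by ring.
  replace ((1 - e') ^ 2 * ((1 + 11 * e) * q')) with ((1 + 11 * e) * (1 - e') ^ 2 * q') by ring.
  apply Rmult_le_compat_r; [exact Hq' | exact Hcube].
Qed.

Lemma le_of_forall_le_cube a b : 0 <= b ->
  (forall e, 0 < e <= 1 / 11 -> a <= (1 + 11 * e) ^ 3 * b) -> a <= b.
Proof.
  intros Hb H. apply Rnot_lt_le. intros Hab.
  set (e := Rmin (1 / 11) ((a - b) / (154 * b + 1))).
  assert (He : 0 < e) by (apply Rmin_pos; [lra | apply Rdiv_lt_0_compat; lra]).
  assert (He1 : e <= 1 / 11) by apply Rmin_l.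
  assert (He2 : e * (154 * b + 1) <= a - b).
  { apply Rmult_le_reg_r with (/ (154 * b + 1)); [apply Rinv_0_lt_compat; lra|].
    rewrite Rmult_assoc, Rinv_r, Rmult_1_r by lra. apply Rmin_r. }
  specialize (H e (conj He He1)).
  assert ((1 + 11 * e) ^ 3 <= 1 + 77 * e) by nra. nra.
Qed.

Section NormalOrderScaling.

Variables (f : nat -> R) (g : R -> R).
Hypothesis f_pos : forall n, (1 <= n)%nat -> 0 < f n.
Hypothesis g_pos : forall x, 0 < x -> 0 < g x.
Hypothesis f_normal : normal_order f g.
Hypothesis f_wsm : weakly_supermult f.
Hypothesis finv_wsm : weakly_supermult (fun n => / f n).

(* A good multiplier [m] lies in [y, rho y], so flatness of [g] near [y] and near [n y] turns
   the comparison of [f n * g m] with [g (n m)] into one of [f n * g y] with [g (n y)]. *)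
Lemma scaling_estimate n e rho : (1 <= n)%nat -> 0 < e <= 1 / 11 -> 1 < rho ->
  eventually (fun y => nearly_constant g (1 + e) y rho ->
    nearly_constant g (1 + e) (INR n * y) rho ->
    f n * g y <= (1 + 11 * e) * g (INR n * y) /\ g (INR n * y) <= (1 + 11 * e) * (f n * g y)).
Proof.
  intros Hn He Hrho. set (e' := Rmin e (rho - 1)).
  assert (He' : 0 < e' <= e) by (split; [apply Rmin_pos | apply Rmin_l]; lra).
  assert (Hrho' : 1 + e' <= rho) by (pose proof (Rmin_r e (rho - 1)); unfold e'; lra).
  pose proof (INR_ge1 n Hn). pose proof (f_pos n Hn).
  destruct (eventually_and _ _ (eventually_ge 1) (eventually_and _ _
      (supermult_witness f g f_pos g_pos f_normal f_wsm n Hn e' ltac:(lra))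
      (submult_witness f g f_pos g_pos f_normal finv_wsm n Hn e' ltac:(lra))))
    as [X HX].
  exists X. intros y Hy Hflat_y Hflat_ny.
  destruct (HX y Hy) as [Hy1 [[m [_ [Hwin Hsup]]] [m' [_ [Hwin' Hsub]]]]].
  assert (Hwindow : forall k : nat, y <= INR k <= (1 + e') * y ->
    (g (INR k) <= (1 + e) * g y /\ g y <= (1 + e) * g (INR k)) /\
    (g (INR n * INR k) <= (1 + e) * g (INR n * y) /\ g (INR n * y) <= (1 + e) * g (INR n * INR k))).
  { intros k Hk. assert (Hk' : y <= INR k <= rho * y) by nra.
    split; [apply Hflat_y; lra | apply Hflat_ny; split; nra]. }
  destruct (Hwindow m Hwin) as [[_ Hm1] [Hm2 _]].
  destruct (Hwindow m' Hwin') as [[Hm1' _] [_ Hm2']].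
  assert (Hgny : 0 < g (INR n * y)) by (apply g_pos; nra).
  split.
  - apply (transfer_bound e e' (f n * g (INR m)) _ (g (INR n * INR m)) _ He' (proj2 He)).
    + lra.
    + rewrite <- Rmult_assoc. exact Hsup.
    + replace ((1 + e) * (f n * g (INR m))) with (f n * ((1 + e) * g (INR m))) by ring.
      apply Rmult_le_compat_l; lra.
    + exact Hm2.
  - apply (transfer_bound e e' (g (INR n * INR m')) _ (f n * g (INR m')) _ He' (proj2 He)).
    + apply Rlt_le, Rmult_lt_0_compat; [lra | apply g_pos; lra].
    + rewrite <- Rmult_assoc. exact Hsub.
    + exact Hm2'.
    + replace ((1 + e) * (f n * g y)) with (f n * ((1 + e) * g y)) by ring.
      apply Rmult_le_compat_l; lra.
Qed.

(* Compare [f n * f k * g y], [f n * g (k y)], [g (n k y)] and [f (n k) * g y] at a [y] where [g]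
   is flat near [y], [k y] and [n k y]. *)
Lemma f_mul_approx n k e : simultaneously_flat g -> (1 <= n)%nat -> (1 <= k)%nat ->
  0 < e <= 1 / 11 -> let K := 1 + 11 * e in
  f n * f k <= K ^ 3 * f (n * k)%nat /\ f (n * k)%nat <= K ^ 3 * (f n * f k).
Proof.
  intros Hflat Hn Hk He K.
  destruct (Hflat (1 + e) ltac:(lra)) as [rho [Hrho Hcommon]].
  pose proof (INR_ge1 k Hk) as HkR. assert (Hnk : (1 <= n * k)%nat) by lia.
  destruct (eventually_and _ _ (eventually_ge 1) (eventually_and _ _
      (scaling_estimate k e rho Hk He Hrho)
      (eventually_and _ _ (scaling_estimate (n * k) e rho Hnk He Hrho)
         (eventually_scale _ (INR k) HkR (scaling_estimate n e rho Hn He Hrho)))))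
    as [X HX].
  destruct (Hcommon (INR k) (INR (n * k)) X HkR (INR_ge1 _ Hnk)) as [y [Hy [F1 [Fk Fnk]]]].
  destruct (HX y Hy) as [Hy1 [Ek [Enk En]]].
  replace (INR n * (INR k * y)) with (INR (n * k) * y) in En by (rewrite mult_INR; ring).
  destruct (Ek F1 Fk) as [Ek1 Ek2]. destruct (Enk F1 Fnk) as [Enk1 Enk2].
  destruct (En Fk Fnk) as [En1 En2]. fold K in Ek1, Ek2, Enk1, Enk2, En1, En2.
  pose proof (f_pos n Hn). pose proof (f_pos k Hk). pose proof (g_pos y ltac:(lra)).
  assert (HK : 1 <= K) by (unfold K; lra).
  split; apply Rmult_le_reg_r with (g y); try assumption.
  - apply Rle_trans with (K * (f n * g (INR k * y))).
    { rewrite Rmult_assoc. replace (K * (f n * g (INR k * y))) with (f n * (K * g (INR k * y)))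
        by ring. apply Rmult_le_compat_l; lra. }
    apply Rle_trans with (K * (K * g (INR (n * k) * y))); [apply Rmult_le_compat_l; lra|].
    replace (K ^ 3 * f (n * k)%nat * g y) with (K * (K * (K * (f (n * k)%nat * g y)))) by ring.
    apply Rmult_le_compat_l; [lra|]. apply Rmult_le_compat_l; lra.
  - apply Rle_trans with (K * g (INR (n * k) * y)); [exact Enk1|].
    apply Rle_trans with (K * (K * (f n * g (INR k * y)))); [apply Rmult_le_compat_l; lra|].
    replace (K ^ 3 * (f n * f k) * g y) with (K * (K * (f n * (K * (f k * g y))))) by ring.
    apply Rmult_le_compat_l; [lra|]. apply Rmult_le_compat_l; [lra|].
    apply Rmult_le_compat_l; lra.
Qed.

Lemma f_mul_of_flat : simultaneously_flat g ->
  forall n k, (1 <= n)%nat -> (1 <= k)%nat -> f (n * k)%nat = f n * f k.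
Proof.
  intros Hflat n k Hn Hk. pose proof (f_pos n Hn). pose proof (f_pos k Hk).
  pose proof (f_pos (n * k) ltac:(lia)).
  apply Rle_antisym; apply le_of_forall_le_cube; try (apply Rlt_le; nra);
    intros e He; apply (f_mul_approx n k e Hflat Hn Hk He).
Qed.

Lemma f_dyadic_bound : simultaneously_flat g -> doubling g -> exists B,
  forall a b, (1 <= a)%nat -> (a <= b <= 2 * a)%nat -> f b <= B * f a /\ f a <= B * f b.
Proof.
  intros Hflat [C [HC HD]].
  assert (He : 0 < 1 / 11 <= 1 / 11) by lra.
  destruct (Hflat (1 + 1 / 11) ltac:(lra)) as [rho [Hrho Hcommon]].
  exists (4 * C). intros a b Ha Hab. assert (Hb : (1 <= b)%nat) by lia.
  pose proof (INR_ge1 a Ha) as HaR. pose proof (INR_ge1 b Hb) as HbR.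
  assert (Hab' : INR a <= INR b <= 2 * INR a).
  { split; [apply le_INR; lia | rewrite <- (mult_INR 2); apply le_INR; lia]. }
  destruct (eventually_and _ _ (eventually_ge 1) (eventually_and _ _
      (scaling_estimate a _ rho Ha He Hrho)
      (eventually_and _ _ (scaling_estimate b _ rho Hb He Hrho)
         (eventually_scale _ (INR a) HaR HD))))
    as [X HX].
  destruct (Hcommon (INR a) (INR b) X HaR HbR) as [y [Hy [F1 [Fa Fb]]]].
  destruct (HX y Hy) as [Hy1 [Ea [Eb Hdbl]]].
  destruct (Ea F1 Fa) as [Ea1 Ea2]. destruct (Eb F1 Fb) as [Eb1 Eb2].
  replace (1 + 11 * (1 / 11)) with 2 in Ea1, Ea2, Eb1, Eb2 by field.
  destruct (Hdbl (INR b * y)) as [D1 D2]; [nra|].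
  pose proof (f_pos a Ha). pose proof (f_pos b Hb). pose proof (g_pos y ltac:(lra)).
  pose proof (g_pos (INR a * y) ltac:(nra)). pose proof (g_pos (INR b * y) ltac:(nra)).
  split; apply Rmult_le_reg_r with (g y); try assumption; nra.
Qed.

(* With [m] in [2w/3, w] a good multiplier for [n = 4]:
   [g (2w) <= g (4m) <= 6 f(4) g m <= 6 f(4) g w]. *)
Lemma doubling_of_increasing : (forall x y, 0 < x -> x <= y -> g x <= g y) -> doubling g.
Proof.
  intros Hincr. pose proof (f_pos 4 ltac:(lia)) as Hf4.
  destruct (submult_witness f g f_pos g_pos f_normal finv_wsm 4 ltac:(lia) (1 / 2) ltac:(lra))
    as [X HX].
  exists (6 * f 4%nat + 1). split; [lra|].
  exists (3 / 2 * (Rabs X + 1)). intros w Hw z [Hz1 Hz2].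
  pose proof (Rle_abs X). pose proof (Rabs_pos X).
  destruct (HX (2 / 3 * w) ltac:(lra)) as [m [_ [Hwin Hsub]]].
  replace (INR 4) with 4 in Hsub by (simpl; lra).
  pose proof (g_pos (INR m) ltac:(lra)). pose proof (g_pos w ltac:(lra)).
  assert (Hgz : g z <= g (4 * INR m)) by (apply Hincr; lra).
  assert (Hgm : g (INR m) <= g w) by (apply Hincr; lra).
  assert (Hgw : g w <= g z) by (apply Hincr; lra).
  split; nra.
Qed.

Lemma power_law_of_flat_doubling : simultaneously_flat g -> doubling g ->
  exists c, forall n, (1 <= n)%nat -> f n = Rpower (INR n) c.
Proof.
  intros Hflat Hdbl. destruct (f_dyadic_bound Hflat Hdbl) as [B HB].
  exact (power_law_of_dyadic_bound f f_pos (f_mul_of_flat Hflat) B HB).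
Qed.

End NormalOrderScaling.

Lemma power_law_of_increasing f g :
  (forall n, (1 <= n)%nat -> 0 < f n) -> (forall x, 0 < x -> 0 < g x) ->
  normal_order f g -> weakly_supermult f -> weakly_supermult (fun n => / f n) ->
  (forall x y, 0 < x -> x <= y -> g x <= g y) ->
  exists c, forall n, (1 <= n)%nat -> f n = Rpower (INR n) c.
Proof.
  intros hf hg Hno Hw Hwinv Hincr.
  pose proof (doubling_of_increasing f g hf hg Hno Hwinv Hincr) as Hdbl.
  apply (power_law_of_flat_doubling f g hf hg Hno Hw Hwinv); [|exact Hdbl].
  exact (simultaneously_flat_of_increasing g hg Hincr Hdbl).
Qed.

Theorem corollary2 (f : nat -> R) (g : R -> R) :
  (forall n : nat, (1 <= n)%nat -> 0 < f n) ->
  weakly_supermult f ->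
  weakly_supermult (fun n => / f n) ->
  (forall x : R, 0 < x -> 0 < g x) ->
  normal_order f g ->
  (monotonic_pos g \/ log_unif_cont g) ->
  exists c : R, forall n : nat, (1 <= n)%nat -> f n = Rpower (INR n) c.
Proof.
  intros hf Hw Hwinv hg Hno [[Hincr | Hdecr] | Hluc].
  - exact (power_law_of_increasing f g hf hg Hno Hw Hwinv Hincr).
  - (* [1/g] is then an increasing normal order of [1/f] *)
    destruct (power_law_of_increasing (fun n => / f n) (fun x => / g x)) as [c Hc].
    + intros n Hn. apply Rinv_0_lt_compat, hf, Hn.
    + intros x Hx. apply Rinv_0_lt_compat, hg, Hx.
    + exact (normal_order_inv f g hf hg Hno).
    + exact Hwinv.
    + rewrite Rinv_inv_fun. exact Hw.
    + intros x y Hx Hxy. apply Rinv_le_contravar; [apply hg; lra | exact (Hdecr x y Hx Hxy)].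
    + exists (- c). intros n Hn. rewrite Rpower_Ropp, <- (Hc n Hn). symmetry. apply Rinv_inv.
  - apply (power_law_of_flat_doubling f g hf hg Hno Hw Hwinv).
    + exact (simultaneously_flat_of_log_unif_cont g hg Hluc).
    + exact (doubling_of_log_unif_cont g hg Hluc).
Qed.
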